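(* Let $G$ be the bipartite graph with left vertices $u_1,u_2,u_3$, right vertices $w_1,w_2$, and edges $u_1w_1,\ u_1w_2,\ u_2w_1,\ u_3w_1,\ u_3w_2$ (and no others). Then there exist $n,k\in\mathbb{N}$ with $k\le n$ such that for every 2-coloring of the edges of $B_{n,k}$, there exists an induced monochromatic copy of $G$ in $B_{n,k}$; that is, there is a set $V'$ of vertices of $B_{n,k}$ such that the induced subgraph of $B_{n,k}$ on $V'$ is isomorphic to $G$ and all of its edges receive the same color.
   Context: For $n\in\mathbb{N}$, $[n]=\{1,\dots,n\}$, and for a set $X$, $\binom{X}{k}$ denotes the set of $k$-element subsets of $X$. For $k\le n$, $B_{n,k}$ is the bipartite graph with left vertex set $[n]$, right vertex set $\binom{[n]}{k}$, and edge set $\{(x,X)\in[n]\times\binom{[n]}{k} : x\in X\}$. For a graph $H=(V,E)$ and $V'\subseteq V$, the induced subgraph on $V'$ has vertex set $V'$ and edge set consisting of all edges of $H$ with both endpoints in $V'$. A 2-coloring of the edges is a map from the edge set to a 2-element set of colors. *)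

From mathcomp Require Import all_boot.
Set Implicit Arguments. Unset Strict Implicit. Unset Printing Implicit Defensive.

Definition kset (n k : nat) := {X : {set 'I_n} | #|X| == k}.

(* Vertex set of B_{n,k}: left part [n] (inl), right part binom([n],k) (inr). *)
Definition Bvert (n k : nat) := ('I_n + kset n k)%type.

Definition Badj (n k : nat) (u v : Bvert n k) : bool :=
  match u, v with
  | inl x, inr X => x \in val X
  | inr X, inl x => x \in val X
  | _, _ => false
  end.

Definition Bedge (n k : nat) := {e : 'I_n * kset n k | e.1 \in val e.2}.

(* The graph G: left vertices u1,u2,u3 ('I_3), right vertices w1,w2 ('I_2),
   edges u1w1, u1w2, u2w1, u3w1, u3w2 (0-based indices). *)
Definition Gvert := ('I_3 + 'I_2)%type.

Definition Gedge (i : 'I_3) (j : 'I_2) : bool :=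
  ((val i == 0) && (val j == 0)) || ((val i == 0) && (val j == 1)) ||
  ((val i == 1) && (val j == 0)) ||
  ((val i == 2) && (val j == 0)) || ((val i == 2) && (val j == 1)).

Definition Gadj (a b : Gvert) : bool :=
  match a, b with
  | inl i, inr j => Gedge i j
  | inr j, inl i => Gedge i j
  | _, _ => false
  end.

Definition induced_copy_of_G (n k : nat) (V' : {set Bvert n k}) : Prop :=
  exists f : Gvert -> Bvert n k,
    [/\ injective f,
        (forall v, v \in V' <-> exists a, f a = v) &
        (forall a b, Badj (f a) (f b) = Gadj a b)].

Definition monochromatic (n k : nat) (c : Bedge n k -> bool)
  (V' : {set Bvert n k}) : Prop :=
  exists b : bool, forall e : Bedge n k,
    inl (val e).1 \in V' -> inr (val e).2 \in V' -> c e = b.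

From mathcomp Require Import all_boot zify.
Set Implicit Arguments. Unset Strict Implicit. Unset Printing Implicit Defensive.

(* Take k = n - 1 and use only the right vertices [n] \ {i}: then x is adjacent
   to [n] \ {i} iff x <> i, so a colouring of B_{n,n-1} becomes a colouring
   M i x of the ordered pairs of distinct elements of [n].  Sending
   w1, w2 to [n] \ {i}, [n] \ {j} and u1, u2, u3 to u, j, v embeds G as an
   induced subgraph (j is the only vertex missing from [n] \ {j}), and it is
   monochromatic as soon as M i j, M i u, M i v, M j u, M j v agree.  Such
   i, j, u, v exist when n >= 12: some i has a set N of 6 out-neighbours of
   one colour b; if some j in N has two b-out-neighbours in N we are done,
   otherwise every vertex of N has at most one, and picking j in N and then
   j' among its (~~ b)-out-neighbours in N gives the pattern in colour ~~ b. *)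

Section Pattern.
Variables (T : finType) (M : T -> T -> bool).

Definition G_pattern :=
  exists b i j u v, uniq [:: i; j; u; v] /\
    [/\ M i j = b, M i u = b, M i v = b, M j u = b & M j v = b].

Lemma G_pattern_of_fork b i j (N : {set T}) :
    i \notin N -> j \in N -> {in N, forall x, M i x = b} ->
  1 < #|[set x in N :\ j | M j x == b]| -> G_pattern.
Proof.
move=> iN jN Mi /card_gt1P[u [v [+ + uv]]].
rewrite !inE => /andP[/andP[uj uN] /eqP Mju] /andP[/andP[vj vN] /eqP Mjv].
have neq_i x : x \in N -> i != x by move=> xN; apply: contraNneq iN => ->.
exists b, i, j, u, v; split; last by split; rewrite ?Mi.
by rewrite /= !inE !negb_or !neq_i // ![j == _]eq_sym uj vj uv.
Qed.

Lemma card_colour_split k b (A : {set T}) :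
  #|[set x in A | M k x == b]| + #|[set x in A | M k x == ~~ b]| = #|A|.
Proof.
rewrite -(cardsID [set x | M k x == b] A); congr (_ + _); apply: eq_card => x.
  by rewrite !inE andbC.
by rewrite !inE andbC; case: (M k x); case: b.
Qed.

Lemma G_pattern_of_star b i (N : {set T}) :
  6 <= #|N| -> i \notin N -> {in N, forall x, M i x = b} -> G_pattern.
Proof.
move=> N6 iN Mi.
have [/exists_inP[j jN fork] | /exists_inPn no_fork] :=
  boolP [exists j in N, 1 < #|[set x in N :\ j | M j x == b]|].
  exact: G_pattern_of_fork iN jN Mi fork.
have few k : k \in N -> #|[set x in N :\ k | M k x == b]| <= 1.
  by move=> kN; rewrite leqNgt no_fork.
have /card_gt0P[j jN] : 0 < #|N| by lia.
set N' := [set x in N :\ j | M j x == ~~ b].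
have N'4 : 4 <= #|N'|.
  have := card_colour_split j b (N :\ j); rewrite -/N'.
  by have := cardsD1 j N; rewrite jN; have := few j jN; lia.
have /card_gt0P[j' j'N'] : 0 < #|N'| by lia.
have j'N : j' \in N by move: j'N'; rewrite !inE => /andP[/andP[]].
apply: (G_pattern_of_fork (b := ~~ b) (i := j) (N := N') _ j'N').
- by rewrite !inE eqxx.
- by move=> x; rewrite !inE => /andP[_ /eqP].
have few' : #|[set x in N' :\ j' | M j' x == b]| <= 1.
  apply: leq_trans (few j' j'N); apply: subset_leq_card; apply/subsetP => x.
  by rewrite !inE => /andP[/andP[-> /andP[/andP[_ ->] _]] ->].
by have := card_colour_split j' b (N' :\ j'); have := cardsD1 j' N'; rewrite j'N'; lia.
Qed.

Lemma G_pattern_of_card : 12 <= #|T| -> G_pattern.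
Proof.
move=> T12; have /card_gt0P[i _] : 0 < #|T| by lia.
have [b big] : exists b, 6 <= #|[set x in [set~ i] | M i x == b]|.
  have := card_colour_split i true [set~ i]; rewrite cardsC1.
  by case: (leqP 6 #|[set x in [set~ i] | M i x == true]|) => ?;
    [exists true | exists (~~ true); lia].
apply: (G_pattern_of_star (b := b) (i := i) big).
- by rewrite !inE eqxx.
- by move=> x; rewrite !inE => /andP[_ /eqP].
Qed.

End Pattern.

Section CoSingletons.
Variable n : nat.

Lemma card_setC1_ord (i : 'I_n) : #|[set~ i]| == n.-1.
Proof. by rewrite cardsC1 card_ord. Qed.

Definition co_singleton (i : 'I_n) : kset n n.-1 :=
  exist _ [set~ i] (card_setC1_ord i).

Lemma mem_co_singleton x i : (x \in val (co_singleton i)) = (x != i).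
Proof. by rewrite !inE. Qed.

Variable c : Bedge n n.-1 -> bool.

Definition co_colour (i x : 'I_n) : bool :=
  if insub (x, co_singleton i) is Some e then c e else false.

Lemma co_colourE (e : Bedge n n.-1) i x :
  val e = (x, co_singleton i) -> c e = co_colour i x.
Proof.
case: e => [[y Y] yY] /= [Ey EY]; subst y Y.
by rewrite /co_colour insubT; congr c; apply: val_inj.
Qed.

Variables i j u v : 'I_n.
Hypothesis ijuv : uniq [:: i; j; u; v].

Definition embed_G (a : Gvert) : Bvert n n.-1 :=
  match a with
  | inl x => inl (nth u [:: u; j; v] x)
  | inr y => inr (co_singleton (nth i [:: i; j] y))
  end.

Lemma mem_embed_G (x : 'I_3) (y : 'I_2) :
  (nth u [:: u; j; v] x \in val (co_singleton (nth i [:: i; j] y))) = Gedge x y.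
Proof.
rewrite mem_co_singleton /Gedge.
move: ijuv; rewrite /= !inE !negb_or => /and4P[/and3P[ij iu iv] /andP[ju jv] _ _].
by case: x y => [[|[|[|?]]] ?] [[|[|?]] ?] //=; rewrite ?eqxx // eq_sym.
Qed.

Lemma Badj_embed_G a b : Badj (embed_G a) (embed_G b) = Gadj a b.
Proof. by case: a b => [x|y] [x'|y'] //=; rewrite mem_embed_G. Qed.

Lemma embed_G_inj : injective embed_G.
Proof.
move: ijuv; rewrite /= !inE !negb_or => /and4P[/and3P[ij _ _] /andP[ju jv] uv _].
have uniq_l : uniq [:: u; j; v] by rewrite /= !inE !negb_or eq_sym ju uv jv.
have uniq_r : uniq [:: i; j] by rewrite /= inE ij.
case=> [x|y] [x'|y'] //= [E]; congr (_ _); apply/val_inj/eqP.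
  by rewrite -(@nth_uniq _ u [:: u; j; v] x x') ?ltn_ord ?E.
by rewrite -(@nth_uniq _ i [:: i; j] y y') ?ltn_ord ?(set1_inj (setC_inj E)).
Qed.

Lemma embed_G_mono b :
    [/\ co_colour i j = b, co_colour i u = b, co_colour i v = b,
        co_colour j u = b & co_colour j v = b] ->
  monochromatic c [set embed_G a | a : Gvert].
Proof.
case=> Mij Miu Miv Mju Mjv; exists b => e.
case/imsetP=> [[x|//] _ Ex] /imsetP[[//|y] _ EX].
have {Ex EX} Ee : val e = (nth u [:: u; j; v] x, co_singleton (nth i [:: i; j] y)).
  by move: Ex EX; case: (val e) => _ _ [->] [->].
have := valP e; rewrite Ee (co_colourE Ee) /= mem_embed_G /Gedge.
by case: x y {Ee} => [[|[|[|?]]] ?] [[|[|?]] ?].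
Qed.

End CoSingletons.

Lemma induced_mono_G_of_pattern n (c : Bedge n n.-1 -> bool) :
  G_pattern (co_colour c) ->
  exists V' : {set Bvert n n.-1}, induced_copy_of_G V' /\ monochromatic c V'.
Proof.
case=> b [i [j [u [v [ijuv colours]]]]].
have mono := embed_G_mono ijuv colours.
exists [set embed_G i j u v a | a : Gvert]; split=> //.
exists (embed_G i j u v); split; [exact: embed_G_inj ijuv | | exact: Badj_embed_G ijuv].
by move=> w; split=> [/imsetP[a _ ->] | [a <-]]; [exists a | apply: imset_f].
Qed.

Lemma B_co_singletons_mono_G n (c : Bedge n n.-1 -> bool) : 12 <= n ->
  exists V' : {set Bvert n n.-1}, induced_copy_of_G V' /\ monochromatic c V'.
Proof.
by move=> n12; apply/induced_mono_G_of_pattern/G_pattern_of_card; rewrite card_ord.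
Qed.

Theorem mainTheorem4 :
  exists n k : nat, k <= n /\
    forall c : Bedge n k -> bool,
      exists V' : {set Bvert n k}, induced_copy_of_G V' /\ monochromatic c V'.
Proof. by exists 12, 11; split=> // c; apply: (@B_co_singletons_mono_G 12). Qed.
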